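(* Let $p>1$, $N\ge1$ and $M\in\mathbb R$. If $u$ is a ground state of (E) with $u(0)=1$, then there exists a constant $c_{N,p,M}>0$ such that for all $r>0$, $u(r)\le\min\{1,c_{N,p,M}r^{-\frac{2}{p-1}}\}$ and $|u_r(r)|\le c_{N,p,M}r^{-\frac{p+1}{p-1}}$.
   Context: (E) denotes the ODE $-u_{rr}-\frac{N-1}{r}u_r=|u|^{p-1}u+M|u_r|^{\frac{2p}{p+1}}$ for $r>0$. A ground state is a nonnegative $u\in C^2([0,\infty))$ with $u_r(0)=0$ solving (E) on $(0,\infty)$. *)

From Stdlib Require Import Reals.
From Coquelicot Require Import Coquelicot.
Open Scope R_scope.

(* |x|^a for a real exponent a > 0, with the convention 0^a = 0
   (Stdlib's Rpower 0 a = 1, so we treat x = 0 separately). *)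
Definition rpow_abs (x a : R) : R :=
  if Req_EM_T x 0 then 0 else Rpower (Rabs x) a.

Definition C2_half_line (u u1 u2 : R -> R) : Prop :=
  (forall r, 0 < r -> is_derive u r (u1 r)) /\
  (forall r, 0 < r -> is_derive u1 r (u2 r)) /\
  filterlim (fun h => (u h - u 0) / h) (at_right 0) (locally (u1 0)) /\
  filterlim (fun h => (u1 h - u1 0) / h) (at_right 0) (locally (u2 0)) /\
  (forall r, 0 <= r ->
     filterlim u2 (within (fun x => 0 <= x) (locally r)) (locally (u2 r))).

Definition solves_E (N : nat) (p M : R) (u u1 u2 : R -> R) : Prop :=
  forall r, 0 < r ->
    - u2 r - (INR N - 1) / r * u1 r
    = rpow_abs (u r) (p - 1) * u r + M * rpow_abs (u1 r) (2 * p / (p + 1)).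

Definition ground_state (N : nat) (p M : R) (u : R -> R) : Prop :=
  exists u1 u2 : R -> R,
    C2_half_line u u1 u2 /\
    (forall r, 0 <= r -> 0 <= u r) /\
    u1 0 = 0 /\
    solves_E N p M u u1 u2.

From Stdlib Require Import Reals Lra Lia.
From Coquelicot Require Import Coquelicot.
Open Scope R_scope.

(* Write N = n + 1 and q = 2p/(p+1) > 1.  First u' <= 0: where u' > 0 the
   equation gives u'' <= |M| u'^q, so u'^(1-q) + (q-1)|M| r is nondecreasing
   there, and u' cannot leave the value 0.  Then (r^n u')' = -r^n (u^p + M|u'|^q)
   shows that at each r with u(r) > 0, either the gradient term is comparable to
   u^p somewhere on [r/2, r], giving -u'(r) >= c u(r)^((p+1)/2), or it never is,
   and integrating gives -u'(r) >= u(r)^p r / (4N).  In both cases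
   u^(-(p-1)/2) - sigma r has nonnegative slope wherever it is negative, which
   yields u(r) <= (sigma r)^(-2/(p-1)).  The gradient bound follows by comparing
   -u' with -u'(r) on [r, 2r] (if M >= 0) or on [r/2, r] (if M < 0 and u'(r) is
   steep) and integrating. *)

(* Right continuity, encoded by replacing the values of [f] left of [a] with
   [f a]. *)
Definition right_continuous_at (f : R -> R) (a : R) : Prop :=
  continuity_pt (fun x => f (Rmax a x)) a.

Lemma right_continuous_atP f a : right_continuous_at f a ->
  forall eps, 0 < eps -> exists del, 0 < del /\
    forall x, a < x < a + del -> Rabs (f x - f a) < eps.
Proof.
  intros H eps Heps. destruct (H eps Heps) as [del [Hdel Hx]].
  exists del; split; auto. intros x Hx'.
  specialize (Hx x); simpl in Hx; unfold R_dist, D_x, no_cond in Hx.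
  rewrite (Rmax_right a x), Rmax_left in Hx by lra.
  apply Hx; split; [split; auto; lra | rewrite Rabs_right; lra].
Qed.

Lemma continuity_pt_Rmax_l a x : continuity_pt (fun y => Rmax a y) x.
Proof.
  intros eps Heps. exists eps. split; auto. intros y [_ Hy]. simpl in *.
  unfold R_dist in *. eapply Rle_lt_trans; [|exact Hy].
  unfold Rmax; destruct (Rle_dec a y), (Rle_dec a x);
    unfold Rabs; repeat destruct Rcase_abs; lra.
Qed.

Lemma continuity_pt_right_continuous_at f a :
  continuity_pt f a -> right_continuous_at f a.
Proof.
  intros H. apply (continuity_pt_comp (fun x => Rmax a x) f).
  - apply continuity_pt_Rmax_l.
  - rewrite Rmax_left by lra. exact H.
Qed.

Lemma right_continuous_at_diff_quotient f d :
  filterlim (fun h => (f h - f 0) / h) (at_right 0) (locally d) ->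
  right_continuous_at f 0.
Proof.
  intros H. apply filterlim_locally with (eps := mkposreal 1 Rlt_0_1) in H.
  destruct H as [del Hdel]; simpl in Hdel.
  set (L := Rabs d + 1).
  assert (HL : 0 < L) by (pose proof (Rabs_pos d); unfold L; lra).
  assert (Hbound : forall y, 0 < y < del -> Rabs (f y - f 0) <= y * L).
  { intros y Hy.
    assert (Hq : Rabs ((f y - f 0) / y - d) < 1).
    { apply Hdel; [| lra].
      change (Rabs (y - 0) < del). rewrite Rminus_0_r, Rabs_right; lra. }
    replace (f y - f 0) with (y * (((f y - f 0) / y - d) + d)) by (field; lra).
    rewrite Rabs_mult, (Rabs_right y) by lra.
    apply Rmult_le_compat_l; [lra |].
    pose proof (Rabs_triang ((f y - f 0) / y - d) d). unfold L; lra. }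
  intros eps Heps. exists (Rmin del (eps / L)).
  split; [apply Rmin_pos; [apply cond_pos | apply Rdiv_lt_0_compat; auto] |].
  intros x [_ Hx]; simpl in *; unfold R_dist in *.
  rewrite Rminus_0_r in Hx. rewrite (Rmax_left 0 0) by lra.
  destruct (Rle_or_lt x 0) as [hx | hx].
  - rewrite Rmax_left, Rminus_diag, Rabs_R0 by lra. exact Heps.
  - rewrite Rmax_right by lra. rewrite Rabs_right in Hx by lra.
    pose proof (Rmin_l del (eps / L)). pose proof (Rmin_r del (eps / L)).
    eapply Rle_lt_trans; [apply Hbound; lra |].
    apply (Rmult_lt_reg_r (/ L)); [apply Rinv_0_lt_compat; auto |].
    replace (x * L * / L) with x by (field; lra). unfold Rdiv in *. lra.
Qed.

Lemma continuity_pt_of_is_derive f x l : is_derive f x l -> continuity_pt f x.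
Proof.
  intros H. apply derivable_continuous_pt. exists l. apply is_derive_Reals, H.
Qed.

Lemma nonincreasing_of_derive_nonpos f df a b : a <= b ->
  right_continuous_at f a ->
  (forall x, a < x <= b -> is_derive f x (df x)) ->
  (forall x, a < x <= b -> df x <= 0) -> f b <= f a.
Proof.
  intros Hab Hrc Hd Hneg.
  destruct (Req_dec a b) as [<- | Hne]; [lra |].
  assert (Hinner : forall a', a < a' < b -> f b <= f a').
  { intros a' Ha'.
    destruct (MVT_gen f a' b df) as [c [Hc Heq]];
      rewrite ?Rmin_left, ?Rmax_right in * by lra.
    - intros x Hx. apply Hd; lra.
    - intros x Hx. apply (continuity_pt_of_is_derive f x (df x)), Hd; lra.
    - pose proof (Hneg c ltac:(lra)). nra. }
  destruct (Rle_or_lt (f b) (f a)) as [H | H]; auto.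
  destruct (right_continuous_atP f a Hrc (f b - f a)) as [del [Hdel Hx]]; [lra |].
  set (a' := a + Rmin del (b - a) / 2).
  pose proof (Rmin_l del (b - a)). pose proof (Rmin_r del (b - a)).
  pose proof (Rmin_pos del (b - a) Hdel ltac:(lra)).
  specialize (Hx a' ltac:(unfold a'; lra)). specialize (Hinner a' ltac:(unfold a'; lra)).
  apply Rabs_def2 in Hx. lra.
Qed.

Lemma increment_le_of_derive_le f df k a b : a <= b ->
  right_continuous_at f a ->
  (forall x, a < x <= b -> is_derive f x (df x)) ->
  (forall x, a < x <= b -> df x <= k) -> f b - f a <= k * (b - a).
Proof.
  intros Hab Hrc Hd Hk.
  enough (f b - k * b <= f a - k * a) by lra.
  apply (nonincreasing_of_derive_nonpos (fun x => f x - k * x) (fun x => df x - k));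
    auto.
  - apply (continuity_pt_minus (fun x => f (Rmax a x)) (fun x => k * Rmax a x));
      auto.
    apply continuity_pt_scal, continuity_pt_Rmax_l.
  - intros x Hx. apply (is_derive_minus f (fun x => k * x)); [apply Hd; auto |].
    auto_derive; auto; ring.
  - intros x Hx. pose proof (Hk x Hx). lra.
Qed.

Lemma nondecreasing_of_derive_nonneg f df a b : a <= b ->
  continuity_pt f a ->
  (forall x, a < x <= b -> is_derive f x (df x)) ->
  (forall x, a < x <= b -> 0 <= df x) -> f a <= f b.
Proof.
  intros Hab Hc Hd Hpos.
  pose proof (increment_le_of_derive_le (fun x => - f x) (fun x => - df x) 0 a b Hab)
    as H.
  enough (- f b - - f a <= 0 * (b - a)) by lra.
  apply H.
  - apply continuity_pt_right_continuous_at, continuity_pt_opp, Hc.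
  - intros x Hx. exact (is_derive_opp f x (df x) (Hd x Hx)).
  - intros x Hx. pose proof (Hpos x Hx). lra.
Qed.

Lemma last_nonneg_point f a s : a <= s ->
  (forall t, a < t <= s -> continuity_pt f t) ->
  exists t0, a <= t0 <= s /\ (t0 = a \/ 0 <= f t0) /\
    forall t, t0 < t <= s -> f t < 0.
Proof.
  intros Has Hc.
  set (E := fun x => a <= x <= s /\ (x = a \/ 0 <= f x)).
  destruct (completeness E) as [m [Hub Hlub]].
  { exists s; intros x [Hx _]; lra. }
  { exists a; split; [lra | left; auto]. }
  assert (Ham : a <= m) by (apply Hub; split; [lra | left; auto]).
  assert (Hms : m <= s) by (apply Hlub; intros x [Hx _]; lra).
  exists m. split; [lra |]. split.
  - destruct (Req_dec m a) as [e | ne]; [left; auto | right].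
    destruct (Rle_or_lt 0 (f m)) as [h | h]; auto. exfalso.
    destruct (Hc m ltac:(lra) (- f m) ltac:(lra)) as [del [Hdel Hx]].
    pose proof (Rmax_l a (m - del / 2)). pose proof (Rmax_r a (m - del / 2)).
    set (m' := Rmax a (m - del / 2)) in *.
    assert (m' < m) by (unfold m'; apply Rmax_lub_lt; lra).
    enough (m <= m') by lra.
    apply Hlub. intros x [Hx1 [Hxa | Hx3]]; [lra |].
    destruct (Rle_or_lt x m') as [h' | h']; auto.
    assert (x <= m) by (apply Hub; split; auto).
    destruct (Req_dec x m) as [-> | nx]; [lra |].
    specialize (Hx x); simpl in Hx; unfold R_dist, D_x, no_cond in Hx.
    assert (HH : Rabs (f x - f m) < - f m).
    { apply Hx. split; [split; auto |]. rewrite Rabs_left1; lra. }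
    apply Rabs_def2 in HH. lra.
  - intros t Ht. destruct (Rle_or_lt 0 (f t)) as [h | h]; auto.
    assert (t <= m) by (apply Hub; split; [lra | right; auto]). lra.
Qed.

Lemma nonneg_of_derive_nonneg_where_neg f df a b : a <= b ->
  continuity_pt f a -> 0 <= f a ->
  (forall x, a < x <= b -> is_derive f x (df x)) ->
  (forall x, a < x <= b -> f x < 0 -> 0 <= df x) -> 0 <= f b.
Proof.
  intros Hab Hc Ha Hd Hneg.
  destruct (last_nonneg_point f a b Hab) as [t0 [Ht0 [Hstart Hafter]]].
  { intros t Ht. apply (continuity_pt_of_is_derive f t (df t)), Hd, Ht. }
  assert (Hf0 : 0 <= f t0) by (destruct Hstart as [-> | h]; auto).
  enough (f t0 <= f b) by lra.
  apply (nondecreasing_of_derive_nonneg f df); try lra.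
  - destruct (Req_dec t0 a) as [-> | ne]; auto.
    apply (continuity_pt_of_is_derive f t0 (df t0)), Hd; lra.
  - intros x Hx. apply Hd; lra.
  - intros x Hx. apply Hneg; [lra | apply Hafter, Hx].
Qed.

Lemma Rpower_pos x a : 0 < Rpower x a.
Proof. apply exp_pos. Qed.

Lemma Rle_Rpower_l_neg x y e : 0 < x <= y -> e <= 0 -> Rpower y e <= Rpower x e.
Proof.
  intros [Hx [Hxy | <-]] [He | ->]; try (rewrite ?Rpower_O; lra).
  left. apply exp_increasing.
  assert (ln x < ln y) by (apply ln_increasing; lra). nra.
Qed.

Lemma Rpower_Rpower_inverse x a b : 0 < x -> a * b = 1 -> Rpower (Rpower x a) b = x.
Proof. intros Hx Hab. rewrite Rpower_mult, Hab. apply Rpower_1, Hx. Qed.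

Lemma Rpower_inv x a : 0 < x -> Rpower (/ x) a = Rpower x (- a).
Proof. intros H. unfold Rpower. rewrite ln_Rinv by auto. f_equal; ring. Qed.

Lemma Rpower_div_base x e : 0 < x -> Rpower x e / x = Rpower x (e - 1).
Proof.
  intros Hx. unfold Rminus. rewrite Rpower_plus, Rpower_Ropp, Rpower_1 by auto.
  reflexivity.
Qed.

Lemma is_derive_Rpower_comp f x l a : is_derive f x l -> 0 < f x ->
  is_derive (fun t => Rpower (f t) a) x (a * Rpower (f x) (a - 1) * l).
Proof.
  intros Hd Hp.
  pose proof (derivable_pt_lim_power (f x) a Hp) as H. apply is_derive_Reals in H.
  replace (a * Rpower (f x) (a - 1) * l) with (l * (a * Rpower (f x) (a - 1))) by ring.
  exact (is_derive_comp (fun y => Rpower y a) f x _ _ H Hd).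
Qed.

Lemma continuity_pt_Rpower_comp f x a : continuity_pt f x -> 0 < f x ->
  continuity_pt (fun t => Rpower (f t) a) x.
Proof.
  intros Hc Hp. apply (continuity_pt_comp f (fun y => Rpower y a)); auto.
  apply derivable_continuous_pt. exists (a * Rpower (f x) (a - 1)).
  apply derivable_pt_lim_power, Hp.
Qed.

Lemma is_derive_pow_id n x : 0 < x -> is_derive (fun y => y ^ n) x (INR n * x ^ n / x).
Proof.
  intros Hx. destruct n as [| n]; auto_derive; auto; simpl; [field | field]; lra.
Qed.

Lemma rpow_abs_nonneg x a : 0 <= rpow_abs x a.
Proof. unfold rpow_abs. destruct Req_EM_T; [lra | left; apply Rpower_pos]. Qed.

Lemma rpow_abs_pos x a : 0 < x -> rpow_abs x a = Rpower x a.
Proof.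
  intros H. unfold rpow_abs. destruct Req_EM_T; [lra |]. rewrite Rabs_right; lra.
Qed.

Lemma rpow_abs_opp x a : rpow_abs (- x) a = rpow_abs x a.
Proof.
  unfold rpow_abs. rewrite Rabs_Ropp.
  destruct (Req_EM_T (- x) 0), (Req_EM_T x 0); auto; lra.
Qed.

Lemma rpow_abs_pred_mul x a : 0 <= x -> rpow_abs x (a - 1) * x = rpow_abs x a.
Proof.
  intros [Hx | <-]; [| rewrite Rmult_0_r; unfold rpow_abs; destruct Req_EM_T; lra].
  rewrite !rpow_abs_pos by auto.
  rewrite <- (Rpower_1 x) at 2 by auto. rewrite <- Rpower_plus. f_equal; ring.
Qed.

Lemma rpow_abs_le_compat x y a : 0 <= x <= y -> 0 < a -> rpow_abs x a <= rpow_abs y a.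
Proof.
  intros [[Hx | <-] Hxy] Ha.
  - rewrite !rpow_abs_pos by lra. apply Rle_Rpower_l; lra.
  - unfold rpow_abs at 1. destruct Req_EM_T; [apply rpow_abs_nonneg | lra].
Qed.

Lemma rpow_abs_lt_compat x y a : 0 <= x < y -> 0 < a -> rpow_abs x a < rpow_abs y a.
Proof.
  intros [[Hx | <-] Hxy] Ha.
  - rewrite !rpow_abs_pos by lra. apply Rlt_Rpower_l; lra.
  - rewrite (rpow_abs_pos y) by lra. unfold rpow_abs.
    destruct Req_EM_T; [apply Rpower_pos | lra].
Qed.

Lemma rpow_abs_root_pow x e : 0 <= x -> 0 < e -> rpow_abs (rpow_abs x (/ e)) e = x.
Proof.
  intros [Hx | <-] He.
  - rewrite (rpow_abs_pos x), rpow_abs_pos by (auto; apply Rpower_pos).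
    apply Rpower_Rpower_inverse; auto. field; lra.
  - unfold rpow_abs. destruct (Req_EM_T 0 0); [| lra]. destruct Req_EM_T; lra.
Qed.

Lemma Rpower_ge1 x e : 0 < x <= 1 -> e <= 0 -> 1 <= Rpower x e.
Proof.
  intros Hx He. replace 1 with (Rpower 1 e) at 1.
  - apply Rle_Rpower_l_neg; lra.
  - unfold Rpower. rewrite ln_1, Rmult_0_r. apply exp_0.
Qed.

Section GroundState.

Variables (n : nat) (p M : R) (u u1 u2 : R -> R).
Hypothesis p_gt1 : 1 < p.
Hypothesis u_deriv : forall r, 0 < r -> is_derive u r (u1 r).
Hypothesis u1_deriv : forall r, 0 < r -> is_derive u1 r (u2 r).
Hypothesis u_right_cont0 : right_continuous_at u 0.
Hypothesis u1_right_cont0 : right_continuous_at u1 0.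
Hypothesis u_nonneg : forall r, 0 <= r -> 0 <= u r.
Hypothesis u1_0 : u1 0 = 0.
Hypothesis u_solves : solves_E (S n) p M u u1 u2.
Hypothesis u_0 : u 0 = 1.

Let q := 2 * p / (p + 1).
Let N := INR (S n).

Lemma q_gt1 : 1 < q.
Proof. unfold q. apply (Rmult_lt_reg_r (p + 1)); [lra |]. field_simplify; lra. Qed.

Lemma N_pos : 0 < N.
Proof. apply lt_0_INR. lia. Qed.

Lemma u2_eq t : 0 < t ->
  u2 t = - (INR n / t) * u1 t - rpow_abs (u t) p - M * rpow_abs (u1 t) q.
Proof.
  intros Ht. pose proof (u_solves t Ht) as E.
  rewrite S_INR, rpow_abs_pred_mul in E by (apply u_nonneg; lra).
  replace (INR n + 1 - 1) with (INR n) in E by ring. unfold q. lra.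
Qed.

Lemma u_cont t : 0 < t -> continuity_pt u t.
Proof. intros Ht. exact (continuity_pt_of_is_derive _ _ _ (u_deriv t Ht)). Qed.

Lemma u1_cont t : 0 < t -> continuity_pt u1 t.
Proof. intros Ht. exact (continuity_pt_of_is_derive _ _ _ (u1_deriv t Ht)). Qed.

Lemma u_right_cont t : 0 <= t -> right_continuous_at u t.
Proof.
  intros [Ht | <-]; auto. apply continuity_pt_right_continuous_at, u_cont, Ht.
Qed.

Lemma u1_right_cont t : 0 <= t -> right_continuous_at u1 t.
Proof.
  intros [Ht | <-]; auto. apply continuity_pt_right_continuous_at, u1_cont, Ht.
Qed.

Lemma u2_le_of_u1_pos t : 0 < t -> 0 < u1 t -> u2 t <= Rabs M * Rpower (u1 t) q.
Proof.
  intros Ht Hu1. rewrite u2_eq, (rpow_abs_pos (u1 t)) by auto.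
  assert (0 <= INR n / t * u1 t).
  { apply Rmult_le_pos; [apply Rdiv_le_0_compat; [apply pos_INR | lra] | lra]. }
  pose proof (rpow_abs_nonneg (u t) p).
  assert (- M * Rpower (u1 t) q <= Rabs M * Rpower (u1 t) q).
  { apply Rmult_le_compat_r; [left; apply Rpower_pos |].
    rewrite <- Rabs_Ropp. apply Rle_abs. }
  lra.
Qed.

(* Where u1 > 0 the equation gives u1' <= |M| u1^q, and q > 1. *)
Lemma u1_potential_mono x t : 0 < x <= t -> (forall y, x <= y <= t -> 0 < u1 y) ->
  Rpower (u1 x) (1 - q) + (q - 1) * Rabs M * x
  <= Rpower (u1 t) (1 - q) + (q - 1) * Rabs M * t.
Proof.
  intros Hxt Hpos. pose proof q_gt1.
  apply (nondecreasing_of_derive_nonneg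
    (fun y => Rpower (u1 y) (1 - q) + (q - 1) * Rabs M * y)
    (fun y => (1 - q) * Rpower (u1 y) (1 - q - 1) * u2 y + (q - 1) * Rabs M));
    try lra.
  - apply continuity_pt_plus.
    + apply continuity_pt_Rpower_comp; [apply u1_cont | apply Hpos]; lra.
    + apply continuity_pt_scal, derivable_continuous_pt, derivable_pt_id.
  - intros y Hy. apply (is_derive_plus (fun y => Rpower (u1 y) (1 - q))).
    + apply is_derive_Rpower_comp; [apply u1_deriv | apply Hpos]; lra.
    + auto_derive; auto; ring.
  - intros y Hy. pose proof (Hpos y ltac:(lra)) as Hy1.
    replace (1 - q - 1) with (- q) by ring.
    assert (Rpower (u1 y) (- q) * u2 y <= Rabs M).
    { replace (Rabs M) with (Rpower (u1 y) (- q) * (Rabs M * Rpower (u1 y) q)).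
      - apply Rmult_le_compat_l; [left; apply Rpower_pos |].
        apply u2_le_of_u1_pos; lra.
      - rewrite Rmult_comm, Rmult_assoc, <- Rpower_plus.
        replace (q + - q) with 0 by ring. rewrite Rpower_O by auto. ring. }
    nra.
Qed.

Lemma u1_pos_lower_bound s0 t : 0 <= s0 < t ->
  (forall x, s0 < x <= t -> 0 < u1 x) ->
  exists eta, 0 < eta /\ forall x, s0 < x <= t -> eta <= u1 x.
Proof.
  intros Hst Hpos. pose proof q_gt1.
  assert (Hdrift : forall x, 0 <= x -> 0 <= (q - 1) * Rabs M * x).
  { intros x Hx. apply Rmult_le_pos; [apply Rmult_le_pos; [lra | apply Rabs_pos] | lra]. }
  set (W := Rpower (u1 t) (1 - q) + (q - 1) * Rabs M * t).
  assert (HW : 0 < W).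
  { pose proof (Rpower_pos (u1 t) (1 - q)). pose proof (Hdrift t ltac:(lra)).
    unfold W. lra. }
  exists (Rpower W (/ (1 - q))). split; [apply Rpower_pos |].
  intros x Hx. pose proof (Hpos x Hx).
  pose proof (u1_potential_mono x t ltac:(lra) ltac:(intros y Hy; apply Hpos; lra)).
  pose proof (Hdrift x ltac:(lra)).
  rewrite <- (Rpower_Rpower_inverse (u1 x) (1 - q) (/ (1 - q))) by (auto; field; lra).
  apply Rle_Rpower_l_neg; [split; [apply Rpower_pos | unfold W; lra] |].
  left. apply Rinv_lt_0_compat. lra.
Qed.

Lemma u1_nonpos t : 0 <= t -> u1 t <= 0.
Proof.
  intros Ht. destruct (Rle_or_lt (u1 t) 0) as [h | Hut]; auto. exfalso.
  destruct (last_nonneg_point (fun x => - u1 x) 0 t) as [t0 [Ht0 [Hstart Hafter]]];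
    [lra | intros x Hx; apply continuity_pt_opp, u1_cont; lra |].
  assert (Hu1t0 : u1 t0 <= 0) by (destruct Hstart as [-> | h]; lra).
  assert (Htt0 : t0 < t) by (destruct (Req_dec t0 t) as [-> | ne]; lra).
  destruct (u1_pos_lower_bound t0 t) as [eta [Heta Hlow]]; [lra | |].
  { intros x Hx. specialize (Hafter x Hx). simpl in Hafter. lra. }
  destruct (right_continuous_atP u1 t0 (u1_right_cont t0 ltac:(lra)) eta Heta)
    as [del [Hdel Hnear]].
  pose proof (Rmin_l del (t - t0)). pose proof (Rmin_r del (t - t0)).
  pose proof (Rmin_pos del (t - t0) Hdel ltac:(lra)).
  set (x := t0 + Rmin del (t - t0) / 2) in *.
  specialize (Hnear x ltac:(unfold x; lra)). specialize (Hlow x ltac:(unfold x; lra)).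
  apply Rabs_def2 in Hnear. lra.
Qed.

Lemma u_noninc a b : 0 <= a <= b -> u b <= u a.
Proof.
  intros Hab. apply (nonincreasing_of_derive_nonpos u u1); try lra.
  - apply u_right_cont; lra.
  - intros x Hx. apply u_deriv; lra.
  - intros x Hx. apply u1_nonpos; lra.
Qed.

Lemma u_le1 r : 0 <= r -> u r <= 1.
Proof. intros Hr. rewrite <- u_0. apply u_noninc; lra. Qed.

(* (x^n u1)' = - x^n (u^p + M |u1|^q) is the radial form of the equation. *)
Lemma flux_increment c a s : 0 < a <= s ->
  (forall t, a < t <= s -> c <= rpow_abs (u t) p + M * rpow_abs (u1 t) q) ->
  a ^ n * - u1 a + c / N * (s ^ S n - a ^ S n) <= s ^ n * - u1 s.
Proof.
  intros Has Hc. pose proof N_pos.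
  enough (a ^ n * - u1 a - c / N * a ^ S n <= s ^ n * - u1 s - c / N * s ^ S n)
    by lra.
  apply (nondecreasing_of_derive_nonneg (fun x => x ^ n * - u1 x - c / N * x ^ S n)
    (fun x => x ^ n * (rpow_abs (u x) p + M * rpow_abs (u1 x) q - c))); try lra.
  - apply continuity_pt_minus.
    + apply continuity_pt_mult; [apply derivable_continuous_pt, derivable_pt_pow |].
      apply continuity_pt_opp, u1_cont; lra.
    + apply continuity_pt_scal, derivable_continuous_pt, derivable_pt_pow.
  - intros x Hx.
    replace (x ^ n * (rpow_abs (u x) p + M * rpow_abs (u1 x) q - c)) with
      (INR n * x ^ n / x * - u1 x + x ^ n * - u2 x
       - c / N * (INR (S n) * x ^ S n / x)).
    + apply (is_derive_minus (fun y => y ^ n * - u1 y)).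
      * apply (is_derive_mult (fun y => y ^ n) (fun y => - u1 y));
          [apply is_derive_pow_id; lra | | intros; apply Rmult_comm].
        apply (is_derive_opp u1), u1_deriv; lra.
      * apply (is_derive_scal (fun y => y ^ S n)), is_derive_pow_id; lra.
    + rewrite u2_eq, <- tech_pow_Rmult by lra. unfold N in *. field. lra.
  - intros x Hx. apply Rmult_le_pos; [apply pow_le; lra |].
    pose proof (Hc x Hx). lra.
Qed.

(* The scale [2 |M| + 1] rather than [2 |M|] avoids a case split on [M = 0]. *)
Definition gradient_threshold t := Rpower (Rpower (u t) p / (2 * Rabs M + 1)) (/ q).

Lemma damping_dominated t : 0 < t -> 0 < u t -> - u1 t < gradient_threshold t ->
  - Rpower (u t) p / 2 <= M * rpow_abs (u1 t) q.
Proof.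
  intros Ht Hut Hsmall. pose proof q_gt1. pose proof (Rabs_pos M).
  unfold gradient_threshold in Hsmall.
  set (X := Rpower (u t) p / (2 * Rabs M + 1)) in *.
  assert (HX : 0 < X) by (apply Rdiv_lt_0_compat; [apply Rpower_pos | lra]).
  assert (Hlt : rpow_abs (u1 t) q < X).
  { rewrite <- rpow_abs_opp, <- (rpow_abs_root_pow X q) by lra.
    apply rpow_abs_lt_compat; [| lra].
    rewrite (rpow_abs_pos X) by auto. pose proof (u1_nonpos t ltac:(lra)). lra. }
  assert (Rabs M * X <= Rpower (u t) p / 2).
  { assert (X * (2 * Rabs M + 1) = Rpower (u t) p) by (unfold X; field; lra).
    nra. }
  assert (- Rabs M <= M) by (pose proof (Rle_abs (- M)); rewrite Rabs_Ropp in *; lra).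
  pose proof (rpow_abs_nonneg (u1 t) q).
  nra.
Qed.

Lemma u_pow_noninc t s : 0 <= t <= s -> 0 < u s ->
  0 < u t /\ Rpower (u s) p <= Rpower (u t) p.
Proof.
  intros Hts Hus. assert (u s <= u t) by (apply u_noninc; lra).
  split; [lra | apply Rle_Rpower_l; lra].
Qed.

Lemma Rpower_p_inv_q x : 0 < x -> Rpower (Rpower x p) (/ q) = Rpower x ((p + 1) / 2).
Proof. intros Hx. rewrite Rpower_mult. f_equal. unfold q. field. lra. Qed.

Lemma gradient_threshold_ge t s : 0 <= t <= s -> 0 < u s ->
  Rpower (2 * Rabs M + 1) (- / q) * Rpower (u s) ((p + 1) / 2) <= gradient_threshold t.
Proof.
  intros Hts Hus. pose proof q_gt1.
  set (K := 2 * Rabs M + 1).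
  assert (HK : 0 < K) by (pose proof (Rabs_pos M); unfold K; lra).
  destruct (u_pow_noninc t s Hts Hus) as [Hut Hp].
  unfold gradient_threshold. fold K.
  rewrite <- Rpower_inv, Rmult_comm, <- (Rpower_p_inv_q (u s)) by auto.
  rewrite Rpower_mult_distr by (try apply Rpower_pos; apply Rinv_0_lt_compat; auto).
  apply Rle_Rpower_l; [left; apply Rinv_0_lt_compat; lra |].
  split; [apply Rmult_lt_0_compat; [apply Rpower_pos | apply Rinv_0_lt_compat; auto] |].
  apply Rmult_le_compat_r; [left; apply Rinv_0_lt_compat |]; lra.
Qed.

Lemma flux_increment_dominated a s : 0 < a <= s -> 0 < u s ->
  (forall t, a < t <= s -> - u1 t < gradient_threshold t) ->
  a ^ n * - u1 a + Rpower (u s) p / 2 / N * (s ^ S n - a ^ S n) <= s ^ n * - u1 s.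
Proof.
  intros Has Hus Hdom. apply flux_increment; [lra |]. intros t Ht.
  destruct (u_pow_noninc t s ltac:(lra) Hus) as [Hut Hp].
  pose proof (damping_dominated t ltac:(lra) Hut (Hdom t Ht)).
  rewrite rpow_abs_pos by auto. lra.
Qed.

Lemma gradient_bound_dominated s : 0 < s -> 0 < u s ->
  (forall t, s / 2 < t <= s -> - u1 t < gradient_threshold t) ->
  Rpower (u s) p * s / (4 * N) <= - u1 s.
Proof.
  intros Hs Hus Hdom. pose proof N_pos.
  set (F := Rpower (u s) p).
  assert (HF : 0 < F) by apply Rpower_pos.
  pose proof (flux_increment_dominated (s / 2) s ltac:(lra) Hus Hdom) as Hflux.
  fold F in Hflux. rewrite <- !tech_pow_Rmult in Hflux.
  assert (Hsn : 0 < s ^ n) by (apply pow_lt; lra).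
  assert (Hpow : 0 < (s / 2) ^ n <= s ^ n) by (split; [apply pow_lt | apply pow_incr]; lra).
  assert (0 <= (s / 2) ^ n * - u1 (s / 2)).
  { apply Rmult_le_pos; [lra |]. pose proof (u1_nonpos (s / 2) ltac:(lra)). lra. }
  assert (F / 2 / N * (s * s ^ n / 2) <= F / 2 / N * (s * s ^ n - s / 2 * (s / 2) ^ n)).
  { apply Rmult_le_compat_l; [apply Rdiv_le_0_compat; lra |]. nra. }
  apply (Rmult_le_reg_l (s ^ n)); auto.
  replace (s ^ n * (F * s / (4 * N))) with (F / 2 / N * (s * s ^ n / 2)) by (field; lra).
  lra.
Qed.

Definition c1 := (/ 2) ^ n * Rpower (2 * Rabs M + 1) (- / q).

Lemma gradient_bound_steep s t0 : 0 < s -> 0 < u s -> s / 2 <= t0 <= s ->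
  gradient_threshold t0 <= - u1 t0 ->
  (forall t, t0 < t <= s -> - u1 t < gradient_threshold t) ->
  c1 * Rpower (u s) ((p + 1) / 2) <= - u1 s.
Proof.
  intros Hs Hus Ht0 Hsteep Hdom. pose proof N_pos.
  pose proof (flux_increment_dominated t0 s ltac:(lra) Hus Hdom) as Hflux.
  pose proof (gradient_threshold_ge t0 s ltac:(lra) Hus) as Hlow.
  assert (Hsn : 0 < s ^ n) by (apply pow_lt; lra).
  assert (Hpow : (/ 2) ^ n * s ^ n <= t0 ^ n).
  { rewrite <- Rpow_mult_distr. apply pow_incr. lra. }
  assert (0 <= Rpower (u s) p / 2 / N * (s ^ S n - t0 ^ S n)).
  { pose proof (Rpower_pos (u s) p).
    apply Rmult_le_pos; [apply Rdiv_le_0_compat; lra |].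
    apply Rge_le, Rge_minus, Rle_ge, pow_incr; lra. }
  assert (Hv : (/ 2) ^ n * - u1 t0 <= - u1 s).
  { apply (Rmult_le_reg_l (s ^ n)); auto. pose proof (u1_nonpos t0 ltac:(lra)). nra. }
  unfold c1. pose proof (pow_lt (/ 2) n ltac:(lra)). nra.
Qed.

Lemma gradient_threshold_cont t : 0 < t -> 0 < u t -> continuity_pt gradient_threshold t.
Proof.
  intros Ht Hut. pose proof (Rabs_pos M).
  apply continuity_pt_Rpower_comp; [| apply Rdiv_lt_0_compat; [apply Rpower_pos | lra]].
  apply (continuity_pt_mult (fun t => Rpower (u t) p) (fun _ => / _)).
  - apply continuity_pt_Rpower_comp; [apply u_cont | auto]; lra.
  - apply continuity_pt_const. intros ? ?; reflexivity.
Qed.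

Lemma gradient_alternative s : 0 < s -> 0 < u s ->
  c1 * Rpower (u s) ((p + 1) / 2) <= - u1 s \/
  Rpower (u s) p * s / (4 * N) <= - u1 s.
Proof.
  intros Hs Hus.
  destruct (last_nonneg_point (fun t => - u1 t - gradient_threshold t) (s / 2) s)
    as [t0 [Ht0 [Hstart Hafter]]]; [lra | |].
  { intros t Ht.
    apply continuity_pt_minus; [apply continuity_pt_opp, u1_cont; lra |].
    apply gradient_threshold_cont; [lra | apply (u_pow_noninc t s); auto; lra]. }
  assert (Hdom : forall t, t0 < t <= s -> - u1 t < gradient_threshold t).
  { intros t Ht. specialize (Hafter t Ht). simpl in Hafter. lra. }
  destruct Hstart as [-> | Hsteep].
  - right. apply gradient_bound_dominated; auto.
  - left. apply (gradient_bound_steep s t0); auto. simpl in Hsteep. lra.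
Qed.

Definition sigma := Rmin ((p - 1) / 2 * c1) (Rmin 1 ((p - 1) / 2 / (4 * N))).

Lemma sigma_spec : 0 < sigma /\ sigma <= (p - 1) / 2 * c1 /\
  sigma * sigma <= (p - 1) / 2 / (4 * N).
Proof.
  pose proof N_pos.
  assert (0 < c1) by (apply Rmult_lt_0_compat; [apply pow_lt; lra | apply Rpower_pos]).
  assert (0 < (p - 1) / 2 / (4 * N)) by (apply Rdiv_lt_0_compat; lra).
  assert (0 < (p - 1) / 2 * c1) by (apply Rmult_lt_0_compat; lra).
  pose proof (Rmin_l ((p - 1) / 2 * c1) (Rmin 1 ((p - 1) / 2 / (4 * N)))).
  pose proof (Rmin_r ((p - 1) / 2 * c1) (Rmin 1 ((p - 1) / 2 / (4 * N)))).
  pose proof (Rmin_l 1 ((p - 1) / 2 / (4 * N))).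
  pose proof (Rmin_r 1 ((p - 1) / 2 / (4 * N))).
  assert (0 < sigma) by (apply Rmin_pos; [| apply Rmin_pos]; lra).
  fold sigma in *. split; [| split]; nra.
Qed.

Lemma decay_slope t : 0 < t -> 0 < u t ->
  Rpower (u t) (- ((p - 1) / 2)) < sigma * t ->
  sigma <= (p - 1) / 2 * Rpower (u t) (- ((p - 1) / 2) - 1) * - u1 t.
Proof.
  intros Ht Hut Hbelow. pose proof N_pos.
  destruct sigma_spec as [Hs0 [Hs1 Hs2]].
  set (a := (p - 1) / 2) in *.
  assert (Ha : 0 < a) by (unfold a; lra).
  assert (Hv : 0 <= - u1 t) by (pose proof (u1_nonpos t ltac:(lra)); lra).
  assert (HB : 0 < Rpower (u t) (- a - 1)) by apply Rpower_pos.
  destruct (gradient_alternative t Ht Hut) as [Hg | Hg].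
  - assert (E : Rpower (u t) (- a - 1) * Rpower (u t) ((p + 1) / 2) = 1).
    { rewrite <- Rpower_plus. replace (- a - 1 + (p + 1) / 2) with 0 by (unfold a; field).
      apply Rpower_O, Hut. }
    assert (a * Rpower (u t) (- a - 1) * (c1 * Rpower (u t) ((p + 1) / 2))
            <= a * Rpower (u t) (- a - 1) * - u1 t) by (apply Rmult_le_compat_l; nra).
    nra.
  - set (X := Rpower (u t) a).
    assert (HX1 : 1 < sigma * t * X).
    { replace 1 with (Rpower (u t) (- a) * X).
      - apply Rmult_lt_compat_r; [apply Rpower_pos | auto].
      - unfold X. rewrite <- Rpower_plus. replace (- a + a) with 0 by ring.
        apply Rpower_O, Hut. }
    assert (E : Rpower (u t) (- a - 1) * Rpower (u t) p = X).
    { unfold X. rewrite <- Rpower_plus. f_equal. unfold a. field. }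
    assert (a * Rpower (u t) (- a - 1) * (Rpower (u t) p * t / (4 * N))
            <= a * Rpower (u t) (- a - 1) * - u1 t) by (apply Rmult_le_compat_l; nra).
    assert (a * Rpower (u t) (- a - 1) * (Rpower (u t) p * t / (4 * N))
            = a / (4 * N) * (t * X)) by (rewrite <- E; field; lra).
    assert (0 < t * X) by (apply Rmult_lt_0_compat; [lra | apply Rpower_pos]).
    assert (sigma * sigma * (t * X) <= a / (4 * N) * (t * X))
      by (apply Rmult_le_compat_r; lra).
    nra.
Qed.

Lemma decay_exponent_bound r : 0 < r -> 0 < u r ->
  sigma * r <= Rpower (u r) (- ((p - 1) / 2)).
Proof.
  intros Hr Hur. destruct sigma_spec as [Hs0 _].
  set (a := (p - 1) / 2).
  assert (Hge1 : forall t, 0 <= t <= r -> 0 < u t /\ 1 <= Rpower (u t) (- a)).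
  { intros t Ht. assert (Hut : 0 < u t) by (pose proof (u_noninc t r Ht); lra).
    split; auto. apply Rpower_ge1; [split; [| apply u_le1] | unfold a]; lra. }
  destruct (Rle_or_lt r (/ sigma)) as [Hsmall | Hlarge].
  - destruct (Hge1 r ltac:(lra)) as [_ H1].
    assert (sigma * r <= sigma * / sigma) by (apply Rmult_le_compat_l; lra).
    rewrite Rinv_r in * by lra. lra.
  - assert (Hinv : 0 < / sigma) by (apply Rinv_0_lt_compat; lra).
    enough (0 <= Rpower (u r) (- a) - sigma * r) by lra.
    apply (nonneg_of_derive_nonneg_where_neg (fun t => Rpower (u t) (- a) - sigma * t)
      (fun t => - a * Rpower (u t) (- a - 1) * u1 t - sigma) (/ sigma) r); try lra.
    + apply continuity_pt_minus.
      * apply continuity_pt_Rpower_comp; [apply u_cont | apply Hge1]; lra.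
      * apply continuity_pt_scal, derivable_continuous_pt, derivable_pt_id.
    + destruct (Hge1 (/ sigma) ltac:(lra)) as [_ H1]. rewrite Rinv_r; lra.
    + intros t Ht. apply (is_derive_minus (fun t => Rpower (u t) (- a))).
      * apply is_derive_Rpower_comp; [apply u_deriv | apply Hge1]; lra.
      * auto_derive; auto; ring.
    + intros t Ht Hneg. unfold a in *.
      pose proof (decay_slope t ltac:(lra) (proj1 (Hge1 t ltac:(lra))) ltac:(lra)).
      lra.
Qed.

Definition C0 := Rpower sigma (- (2 / (p - 1))).

Lemma u_decay r : 0 < r -> u r <= C0 * Rpower r (- (2 / (p - 1))).
Proof.
  intros Hr. destruct sigma_spec as [Hs0 _].
  assert (0 < C0 * Rpower r (- (2 / (p - 1))))
    by (apply Rmult_lt_0_compat; apply Rpower_pos).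
  destruct (Rle_or_lt (u r) 0) as [h | Hur]; [lra |].
  unfold C0. rewrite Rpower_mult_distr by auto.
  rewrite <- (Rpower_Rpower_inverse (u r) (- ((p - 1) / 2)) (- (2 / (p - 1))))
    by (auto; field; lra).
  apply Rle_Rpower_l_neg.
  - split; [apply Rmult_lt_0_compat |]; auto. apply decay_exponent_bound; auto.
  - assert (0 < 2 / (p - 1)) by (apply Rdiv_lt_0_compat; lra). lra.
Qed.

Lemma u1_bound_M_nonneg r : 0 < r -> 0 <= M -> - u1 r * r <= 2 ^ n * u r.
Proof.
  intros Hr HM.
  assert (H2n : 0 < 2 ^ n) by (apply pow_lt; lra).
  set (v := - u1 r / 2 ^ n).
  assert (Hv : forall t, r < t <= 2 * r -> v <= - u1 t).
  { intros t Ht.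
    pose proof (flux_increment 0 r t ltac:(lra)) as Hflux.
    assert (Hmon : r ^ n * - u1 r <= t ^ n * - u1 t).
    { enough (r ^ n * - u1 r + 0 / N * (t ^ S n - r ^ S n) <= t ^ n * - u1 t) by
        (unfold Rdiv in *; lra).
      apply Hflux. intros x Hx.
      pose proof (rpow_abs_nonneg (u x) p). pose proof (rpow_abs_nonneg (u1 x) q).
      assert (0 <= M * rpow_abs (u1 x) q) by (apply Rmult_le_pos; lra). lra. }
    assert (Hrn : 0 < r ^ n) by (apply pow_lt; lra).
    assert (Htn : t ^ n <= 2 ^ n * r ^ n)
      by (rewrite <- Rpow_mult_distr; apply pow_incr; lra).
    pose proof (u1_nonpos t ltac:(lra)).
    unfold v. apply (Rmult_le_reg_l (2 ^ n * r ^ n)); [nra |].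
    replace (2 ^ n * r ^ n * (- u1 r / 2 ^ n)) with (r ^ n * - u1 r) by (field; lra).
    nra. }
  pose proof (increment_le_of_derive_le u u1 (- v) r (2 * r)) as Hinc.
  assert (v * r <= u r).
  { pose proof (u_nonneg (2 * r) ltac:(lra)).
    enough (u (2 * r) - u r <= - v * (2 * r - r)) by lra.
    apply Hinc; try lra.
    - apply u_right_cont; lra.
    - intros x Hx. apply u_deriv; lra.
    - intros x Hx. pose proof (Hv x Hx). lra. }
  replace (- u1 r * r) with (2 ^ n * (v * r)) by (unfold v; field; lra).
  apply Rmult_le_compat_l; lra.
Qed.

Definition steep_threshold r := rpow_abs (rpow_abs (u (r / 2)) p / Rabs M) (/ q).

Lemma u2_pos_of_steep r t : M < 0 -> 0 < r / 2 <= t ->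
  steep_threshold r < - u1 t -> 0 < u2 t.
Proof.
  intros HM Ht Hsteep. pose proof q_gt1.
  unfold steep_threshold in Hsteep.
  set (Y := rpow_abs (u (r / 2)) p) in *.
  assert (HY : 0 <= Y) by apply rpow_abs_nonneg.
  assert (HMa : Rabs M = - M) by (apply Rabs_left; auto).
  assert (Hlt : Y / Rabs M < rpow_abs (u1 t) q).
  { assert (0 <= Y / Rabs M) by (apply Rdiv_le_0_compat; lra).
    rewrite <- rpow_abs_opp, <- (rpow_abs_root_pow (Y / Rabs M) q) by lra.
    apply rpow_abs_lt_compat; [split; [apply rpow_abs_nonneg |] |]; lra. }
  assert (Hu : rpow_abs (u t) p <= Y).
  { apply rpow_abs_le_compat; [split; [apply u_nonneg | apply u_noninc] |]; lra. }
  assert (Y < - M * rpow_abs (u1 t) q).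
  { rewrite <- HMa. apply (Rmult_lt_reg_l (/ Rabs M)); [apply Rinv_0_lt_compat; lra |].
    replace (/ Rabs M * (Rabs M * rpow_abs (u1 t) q)) with (rpow_abs (u1 t) q)
      by (field; lra).
    unfold Rdiv in Hlt. lra. }
  assert (0 <= - (INR n / t) * u1 t).
  { pose proof (u1_nonpos t ltac:(lra)).
    assert (0 <= INR n / t) by (apply Rdiv_le_0_compat; [apply pos_INR | lra]). nra. }
  rewrite u2_eq by lra. lra.
Qed.

(* Below [- steep_threshold r] the function u1 is increasing, so it cannot
   come down to the value u1 r from above. *)
Lemma u1_le_of_steep r x : M < 0 -> 0 < r -> r / 2 <= x <= r ->
  steep_threshold r < - u1 r -> u1 x <= u1 r.
Proof.
  intros HM Hr Hx Hsteep.
  destruct (Rle_or_lt (u1 x) (u1 r)) as [h | Hgt]; auto. exfalso.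
  pose proof (Rmin_l (u1 x) (- steep_threshold r)).
  pose proof (Rmin_r (u1 x) (- steep_threshold r)).
  assert (u1 r < Rmin (u1 x) (- steep_threshold r))
    by (apply Rmin_glb_lt; lra).
  set (m := (u1 r + Rmin (u1 x) (- steep_threshold r)) / 2) in *.
  enough (0 <= u1 r - m) by (unfold m in *; lra).
  apply (nonneg_of_derive_nonneg_where_neg (fun y => u1 y - m) (fun y => u2 y - 0) x r);
    try lra.
  - apply continuity_pt_minus; [apply u1_cont; lra | apply continuity_pt_const].
    intros ? ?; reflexivity.
  - unfold m; lra.
  - intros y Hy. apply (is_derive_minus u1 (fun _ => m)); [apply u1_deriv; lra |].
    auto_derive; auto.
  - intros y Hy Hneg. simpl in Hneg.
    assert (0 < u2 y) by (apply (u2_pos_of_steep r); unfold m in *; lra). lra.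
Qed.

Lemma u1_bound_M_neg r : 0 < r -> M < 0 ->
  - u1 r <= steep_threshold r \/ - u1 r * r <= 2 * u (r / 2).
Proof.
  intros Hr HM.
  destruct (Rle_or_lt (- u1 r) (steep_threshold r)) as [h | Hsteep]; [left; auto | right].
  assert (u r - u (r / 2) <= u1 r * (r - r / 2)).
  { apply (increment_le_of_derive_le u u1); try lra.
    - apply u_right_cont; lra.
    - intros x Hx. apply u_deriv; lra.
    - intros x Hx. apply (u1_le_of_steep r x); lra. }
  pose proof (u_nonneg r ltac:(lra)). lra.
Qed.

Definition C1 := C0 * Rpower 2 (2 / (p - 1)).

Lemma C0_pos : 0 < C0.
Proof. apply Rpower_pos. Qed.

Lemma C1_pos : 0 < C1.
Proof. apply Rmult_lt_0_compat; [apply C0_pos | apply Rpower_pos]. Qed.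

Lemma u_decay_half r : 0 < r -> u (r / 2) <= C1 * Rpower r (- (2 / (p - 1))).
Proof.
  intros Hr. eapply Rle_trans; [apply u_decay; lra |].
  unfold Rdiv at 1. rewrite <- Rpower_mult_distr, Rpower_inv, Ropp_involutive by lra.
  unfold C1. lra.
Qed.

Lemma steep_threshold_le r : M < 0 -> 0 < r ->
  steep_threshold r <=
  Rpower (Rabs M) (- / q) * Rpower C1 ((p + 1) / 2) * Rpower r (- ((p + 1) / (p - 1))).
Proof.
  intros HM Hr. pose proof q_gt1. pose proof C1_pos.
  assert (HMa : 0 < Rabs M) by (rewrite Rabs_left; lra).
  set (B := C1 * Rpower r (- (2 / (p - 1)))).
  assert (HB : 0 < B) by (apply Rmult_lt_0_compat; [lra | apply Rpower_pos]).
  assert (Hle : steep_threshold r <= rpow_abs (rpow_abs B p / Rabs M) (/ q)).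
  { unfold steep_threshold.
    assert (rpow_abs (u (r / 2)) p <= rpow_abs B p).
    { apply rpow_abs_le_compat; [split; [apply u_nonneg | apply u_decay_half] |]; lra. }
    apply rpow_abs_le_compat; [| apply Rinv_0_lt_compat; lra].
    split; [apply Rdiv_le_0_compat; [apply rpow_abs_nonneg | lra] |].
    apply Rmult_le_compat_r; [left; apply Rinv_0_lt_compat |]; lra. }
  rewrite (rpow_abs_pos B), rpow_abs_pos in Hle
    by (try apply Rdiv_lt_0_compat; try apply Rpower_pos; lra).
  unfold Rdiv in Hle.
  rewrite <- Rpower_mult_distr, Rpower_inv, Rpower_p_inv_q in Hle
    by (try apply Rpower_pos; try apply Rinv_0_lt_compat; lra).
  unfold B in Hle.
  rewrite <- Rpower_mult_distr, Rpower_mult in Hle by (try apply Rpower_pos; lra).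
  replace (- (2 / (p - 1)) * ((p + 1) / 2)) with (- ((p + 1) / (p - 1))) in Hle
    by (field; lra).
  lra.
Qed.

Definition grad_const :=
  2 ^ n * C0 + 2 * C1 + Rpower (Rabs M) (- / q) * Rpower C1 ((p + 1) / 2).

Lemma grad_const_pos : 0 < grad_const.
Proof.
  pose proof C0_pos. pose proof C1_pos. unfold grad_const.
  assert (0 < 2 ^ n) by (apply pow_lt; lra).
  assert (0 < Rpower (Rabs M) (- / q) * Rpower C1 ((p + 1) / 2))
    by (apply Rmult_lt_0_compat; apply Rpower_pos).
  nra.
Qed.

Lemma u1_decay r : 0 < r -> - u1 r <= grad_const * Rpower r (- ((p + 1) / (p - 1))).
Proof.
  intros Hr. pose proof C0_pos. pose proof C1_pos.
  set (rho := Rpower r (- (2 / (p - 1)))).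
  set (R1 := Rpower r (- ((p + 1) / (p - 1)))).
  assert (HR1 : 0 < R1) by apply Rpower_pos.
  assert (Hrho : rho = R1 * r).
  { unfold rho, R1.
    replace (- ((p + 1) / (p - 1))) with (- (2 / (p - 1)) - 1) by (field; lra).
    rewrite <- Rpower_div_base by auto. field. lra. }
  enough (- u1 r <= 2 ^ n * C0 * R1 \/ - u1 r <= 2 * C1 * R1 \/
          - u1 r <= Rpower (Rabs M) (- / q) * Rpower C1 ((p + 1) / 2) * R1) as Hcases.
  { assert (0 < 2 ^ n) by (apply pow_lt; lra).
    assert (0 < Rpower (Rabs M) (- / q) * Rpower C1 ((p + 1) / 2))
      by (apply Rmult_lt_0_compat; apply Rpower_pos).
    assert (0 < 2 ^ n * C0 * R1) by (apply Rmult_lt_0_compat; [nra | lra]).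
    assert (0 < 2 * C1 * R1) by (apply Rmult_lt_0_compat; lra).
    assert (0 < Rpower (Rabs M) (- / q) * Rpower C1 ((p + 1) / 2) * R1)
      by (apply Rmult_lt_0_compat; lra).
    unfold grad_const. rewrite !Rmult_plus_distr_r. lra. }
  destruct (Rle_or_lt 0 M) as [HM | HM].
  - left. apply (Rmult_le_reg_r r); auto.
    pose proof (u1_bound_M_nonneg r Hr HM).
    pose proof (u_decay r Hr) as Hdecay. fold rho in Hdecay. rewrite Hrho in Hdecay.
    assert (2 ^ n * u r <= 2 ^ n * (C0 * (R1 * r)))
      by (apply Rmult_le_compat_l; [apply pow_le |]; lra).
    lra.
  - right. destruct (u1_bound_M_neg r Hr HM) as [h | h].
    + right. eapply Rle_trans; [exact h | apply steep_threshold_le; auto].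
    + left. apply (Rmult_le_reg_r r); auto.
      pose proof (u_decay_half r Hr) as Hdecay. fold rho in Hdecay. rewrite Hrho in Hdecay.
      lra.
Qed.

Lemma ground_state_decay r : 0 < r ->
  u r <= Rmin 1 ((C0 + grad_const) * Rpower r (- (2 / (p - 1)))) /\
  Rabs (u1 r) <= (C0 + grad_const) * Rpower r (- ((p + 1) / (p - 1))).
Proof.
  intros Hr. pose proof C0_pos. pose proof grad_const_pos.
  pose proof (Rpower_pos r (- (2 / (p - 1)))).
  pose proof (Rpower_pos r (- ((p + 1) / (p - 1)))).
  split.
  - apply Rmin_glb; [apply u_le1; lra |].
    pose proof (u_decay r Hr). nra.
  - rewrite Rabs_left1 by (apply u1_nonpos; lra).
    pose proof (u1_decay r Hr). nra.
Qed.

End GroundState.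

Theorem proposition2p4 (N : nat) (p M : R) :
  1 < p -> (1 <= N)%nat ->
  exists c : R, 0 < c /\
    forall u : R -> R,
      ground_state N p M u -> u 0 = 1 ->
      forall r : R, 0 < r ->
        u r <= Rmin 1 (c * Rpower r (- (2 / (p - 1)))) /\
        Rabs (Derive u r) <= c * Rpower r (- ((p + 1) / (p - 1))).
Proof.
  intros Hp HN. destruct N as [| n]; [lia |].
  exists (C0 n p M + grad_const n p M).
  split; [pose proof (C0_pos n p M); pose proof (grad_const_pos n p M); lra |].
  intros u [u1 [u2 [[Hu [Hu1 [Hq [Hq1 _]]]] [Hnonneg [Hu1_0 Hsol]]]]] Hu0 r Hr.
  rewrite (is_derive_unique u r (u1 r) (Hu r Hr)).
  apply (ground_state_decay n p M u u1 u2); auto.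
  - exact (right_continuous_at_diff_quotient u _ Hq).
  - exact (right_continuous_at_diff_quotient u1 _ Hq1).
Qed.
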